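(* Fix integers $S,T,m,m_{\max}\ge1$, finite sets $\mathcal{F}\subset\mathbb{R}^S$ and $\mathcal{T}\subset\mathbb{R}^T$, and $\alpha,\beta\ge0$ with $\alpha+\beta\le1$. Then the loss $\mathrm{FNGW}_{\alpha,\beta}:\mathcal{G}_m\times\mathcal{G}\to\mathbb{R}$ admits an Implicit Loss Embedding: there exist a separable Hilbert space $\mathcal{H}$ and measurable bounded maps $\psi:\mathcal{G}_m\to\mathcal{H}$, $\varphi:\mathcal{G}\to\mathcal{H}$ such that $\mathrm{FNGW}_{\alpha,\beta}(z,y)=\langle\psi(z),\varphi(y)\rangle_{\mathcal{H}}$ for all $z\in\mathcal{G}_m$, $y\in\mathcal{G}$, and $\|\varphi(y)\|_{\mathcal{H}}\le1$ for all $y\in\mathcal{G}$.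
   Context: $\mathcal{G}$ is the set of labeled graphs $g=(F,A,E,\boldsymbol p)$ with $m_g\le m_{\max}$ nodes, $A\in\{0,1\}^{m_g\times m_g}$, $F=(F_i)_{i=1}^{m_g}\in\mathcal{F}^{m_g}$, $E=(E_{ij})\in\mathcal{T}^{m_g\times m_g}$, $\boldsymbol p=m_g^{-1}\mathbb{1}_{m_g}$ (a finite set). $\mathcal{G}_m$ is the set of $(F,A,E,\boldsymbol p)$ with $A\in[0,1]^{m\times m}$, $F\in\mathrm{Conv}(\mathcal{F})^m$, $E\in\mathrm{Conv}(\mathcal{T})^{m\times m}$, $\boldsymbol p=m^{-1}\mathbb{1}_m$, where $\mathrm{Conv}$ is the convex hull. For $g_m=(F,A,E,\boldsymbol p)\in\mathcal{G}_m$ and $g=(\tilde F,\tilde A,\tilde E,\tilde{\boldsymbol p})\in\mathcal{G}$, $$\mathrm{FNGW}_{\alpha,\beta}(g_m,g)=\min_{\pi\in\Pi(\boldsymbol p,\tilde{\boldsymbol p})}\sum_{i,j,k,l}\Big[\alpha\|E(i,k)-\tilde E(j,l)\|^2_{\mathbb{R}^T}+\beta|A(i,k)-\tilde A(j,l)|^2+(1-\alpha-\beta)\|F(i)-\tilde F(j)\|^2_{\mathbb{R}^S}\Big]\pi_{k,l}\pi_{i,j},$$ where $\Pi(\boldsymbol p,\tilde{\boldsymbol p})$ is the set of nonnegative matrices with row sums $\boldsymbol p$ and column sums $\tilde{\boldsymbol p}$. $\mathcal{G}_m$ carries the topology of $\mathbb{R}^{m\times S}\times\mathbb{R}^{m\times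 m}\times\mathbb{R}^{m\times m\times T}$ and $\mathcal{G}$ the discrete topology. *)

From HB Require Import structures.
From mathcomp Require Import all_boot all_order all_algebra.
From mathcomp Require Import classical_sets reals.
Set Implicit Arguments. Unset Strict Implicit. Unset Printing Implicit Defensive.
Import Order.TTheory GRing.Theory Num.Theory.
Local Open Scope classical_set_scope.
Local Open Scope ring_scope.

Section Defs.
Variable R : realType.

Definition sigma_closed (T : Type) (S : set (set T)) : Prop :=
  [/\ S set0,
      (forall A, S A -> S (~` A)) &
      (forall A : nat -> set T, (forall n, S (A n)) -> S (\bigcup_n A n))].

Definition sigma_gen (T : Type) (G : set (set T)) : set (set T) :=
  fun A => forall S, sigma_closed S -> (forall B, G B -> S B) -> S A.

Definition borel_measurable (A B : Type) (openA : set (set A))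
  (openB : set (set B)) (f : A -> B) : Prop :=
  forall U, sigma_gen openB U -> sigma_gen openA (f @^-1` U).

Definition ip_norm (H : lmodType R) (ip : H -> H -> R) (x : H) : R :=
  Num.sqrt (ip x x).

Definition is_separable_hilbert (H : lmodType R) (ip : H -> H -> R) : Prop :=
  [/\ (forall a x y z, ip (a *: x + y) z = a * ip x z + ip y z),
      (forall x y, ip x y = ip y x),
      (forall x, 0 <= ip x x),
      (forall x, ip x x = 0 -> x = 0) &
      (
      (forall u : nat -> H,
         (forall e, 0 < e -> exists N, forall p q, (N <= p)%N -> (N <= q)%N ->
              ip_norm ip (u p - u q) < e) ->
         exists l, forall e, 0 < e -> exists N, forall n, (N <= n)%N ->
              ip_norm ip (u n - l) < e) /\
      (exists d : nat -> H, forall x e, 0 < e -> exists n, ip_norm ip (x - d n) < e))].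

Definition ip_open (H : lmodType R) (ip : H -> H -> R) : set (set H) :=
  fun U => forall x, U x -> exists2 e, 0 < e &
     forall y, ip_norm ip (y - x) < e -> U y.

Definition sqnorm (n : nat) (v : 'rV[R]_n) : R := \sum_(k < n) (v ord0 k) ^+ 2.

Definition conv_hull (n : nat) (s : seq 'rV[R]_n) (x : 'rV[R]_n) : Prop :=
  exists w : 'I_(size s) -> R,
    [/\ (forall i, 0 <= w i), \sum_i w i = 1 &
        x = \sum_i w i *: nth 0 s i].

(* a labeled graph (F, A, E) with n nodes; p is the uniform weight 1/n *)
Record graph (S T : nat) := Graph {
  gn : nat;
  gF : 'I_gn -> 'rV[R]_S;
  gA : 'I_gn -> 'I_gn -> R;
  gE : 'I_gn -> 'I_gn -> 'rV[R]_T }.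
Arguments gn {S T} g.
Arguments gF {S T} g _.
Arguments gA {S T} g _ _.
Arguments gE {S T} g _ _.

Definition in_calG (S T mmax : nat) (Fs : seq 'rV[R]_S) (Ts : seq 'rV[R]_T)
  (g : graph S T) : Prop :=
  [/\ (1 <= gn g <= mmax)%N,
      (forall i, gF g i \in Fs),
      (forall i j, gA g i j = 0 \/ gA g i j = 1) &
      (forall i j, gE g i j \in Ts)].

Definition in_calGm (S T m : nat) (Fs : seq 'rV[R]_S) (Ts : seq 'rV[R]_T)
  (g : graph S T) : Prop :=
  [/\ gn g = m,
      (forall i, conv_hull Fs (gF g i)),
      (forall i j, 0 <= gA g i j <= 1) &
      (forall i j, conv_hull Ts (gE g i j))].

(* coordinatewise eps-closeness of two graphs with the same nodes
   (Euclidean topology of R^{m x S} x R^{m x m} x R^{m x m x T}) *)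
Definition graph_close (S T : nat) (eps : R) (g g' : graph S T) : Prop :=
  exists e : gn g = gn g',
    [/\ (forall i k, `|gF g i ord0 k - gF g' (cast_ord e i) ord0 k| < eps),
        (forall i j, `|gA g i j - gA g' (cast_ord e i) (cast_ord e j)| < eps) &
        (forall i j k, `|gE g i j ord0 k - gE g' (cast_ord e i) (cast_ord e j) ord0 k| < eps)].

Definition calG S T mmax Fs Ts := {g : graph S T | in_calG mmax Fs Ts g}.
Definition calGm S T m Fs Ts := {g : graph S T | in_calGm m Fs Ts g}.

Definition calGm_open S T m Fs Ts : set (set (@calGm S T m Fs Ts)) :=
  fun U => forall z, U z -> exists2 e, 0 < e &
    forall z', graph_close e (sval z) (sval z') -> U z'.

Definition discrete_open (A : Type) : set (set A) := fun _ => True.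

Definition coupling (m n : nat) (pi : 'I_m -> 'I_n -> R) : Prop :=
  [/\ (forall i j, 0 <= pi i j),
      (forall i, \sum_j pi i j = m%:R^-1) &
      (forall j, \sum_i pi i j = n%:R^-1)].

Definition fngw_cost (S T : nat) (alpha beta : R) (g g' : graph S T)
  (pi : 'I_(gn g) -> 'I_(gn g') -> R) : R :=
  \sum_(i < gn g) \sum_(j < gn g') \sum_(k < gn g) \sum_(l < gn g')
    (alpha * sqnorm (gE g i k - gE g' j l)
     + beta * (gA g i k - gA g' j l) ^+ 2
     + (1 - alpha - beta) * sqnorm (gF g i - gF g' j)) * pi k l * pi i j.

(* FNGW = min over couplings; the minimum is attained (compact set,
   continuous cost), so it equals the infimum *)
Definition FNGW (S T : nat) (alpha beta : R) (g g' : graph S T) : R :=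
  inf [set fngw_cost alpha beta pi | pi in @coupling (gn g) (gn g')].

End Defs.

From HB Require Import structures.
From mathcomp Require Import all_boot all_order all_algebra.
From mathcomp Require Import boolp classical_sets reals.
From mathcomp Require Import ring lra.
From mathcomp Require topology normedtype sequences.
Import Order.TTheory GRing.Theory Num.Theory.
Set Implicit Arguments. Unset Strict Implicit. Unset Printing Implicit Defensive.
Local Open Scope classical_set_scope.
Local Open Scope ring_scope.

(* The output space G is finite, so one can take H = R^K for a finite set K
   of codes that covers G: psi z lists the losses FNGW(z, y_k) over the codes
   and phi y is the basis vector of a code of y, whence <psi z, phi y> =
   FNGW(z, y) and |phi y| = 1.  The analytic work is the regularity of psi.
   For a coupling pi the transport cost is an average of a bounded integrand
   under pi (x) pi, and the integrand is Lipschitz in the entries of z, which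
   are bounded on G_m; passing to the infimum over couplings, FNGW(., y) is
   bounded and Lipschitz, so psi is bounded and continuous, hence Borel. *)

Section RealCauchy.
Import topology normedtype sequences numFieldNormedType.Exports.

Lemma real_cauchy_cvg (R : realType) (u : nat -> R) :
  (forall e, 0 < e -> exists N, forall p q, (N <= p)%N -> (N <= q)%N ->
     `|u p - u q| < e) ->
  exists l, forall e, 0 < e -> exists N, forall n, (N <= n)%N -> `|u n - l| < e.
Proof.
move=> u_cauchy; have /cvg_ex[l u_l] : cvg (u @ \oo).
  apply/cauchy_cvgP/cauchy_exP => e e0.
  have [N HN] := u_cauchy e e0.
  by exists (u N), N => // n /= Nn; apply: HN.
exists l => e e0; have /cvgrPdist_lt/(_ e e0)[N _ HN] := u_l.
by exists N => n Nn; rewrite distrC; apply: HN.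
Qed.

End RealCauchy.

Section RowDot.
Variables (R : realType) (N : nat).
Implicit Types (x y : 'rV[R]_N) (c e : R).

Definition row_dot x y : R := \sum_k x ord0 k * y ord0 k.

Lemma row_dot_ge0 x : 0 <= row_dot x x.
Proof. by apply: sumr_ge0 => k _; rewrite -expr2 sqr_ge0. Qed.

Lemma row_coord_le_norm x k : `|x ord0 k| <= ip_norm row_dot x.
Proof.
rewrite /ip_norm -sqrtr_sqr ler_wsqrtr // /row_dot (bigD1 k) //= expr2 lerDl.
by apply: sumr_ge0 => i _; rewrite -expr2 sqr_ge0.
Qed.

Lemma row_norm_le x c : (forall k, `|x ord0 k| <= c) -> ip_norm row_dot x <= N%:R * c.
Proof.
move=> xc; have [N0|N_gt0] := posnP N.
  have -> : N%:R = 0 :> R by rewrite N0.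
  rewrite /ip_norm /row_dot big1 ?sqrtr0 ?mul0r // => k.
  by have := ltn_ord k; rewrite {2}N0.
have c0 : 0 <= c by apply: le_trans (xc (Ordinal N_gt0)).
have x_sq : row_dot x x <= (N%:R * c) ^+ 2.
  apply: (@le_trans _ _ (\sum_(k < N) c * c)).
    apply: ler_sum => k _; apply: le_trans (ler_norm _) _.
    by rewrite normrM ler_pM.
  have N1 : 1 <= N%:R :> R by rewrite ler1n.
  rewrite sumr_const card_ord -mulr_natl; nra.
by apply: le_trans (ler_wsqrtr x_sq) _; rewrite sqrtr_sqr ger0_norm ?mulr_ge0.
Qed.

Lemma row_norm_lt x e : 0 < e ->
  (forall k, `|x ord0 k| <= e / (N%:R + 1)) -> ip_norm row_dot x < e.
Proof.
move=> e0 /row_norm_le xe; apply: le_lt_trans xe _.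
by rewrite mulrA ltr_pdivrMr ?ltr_wpDl // mulrC ltr_pM2l // ltrDl.
Qed.

Lemma row_dot_delta x k : row_dot x (delta_mx ord0 k) = x ord0 k.
Proof.
rewrite /row_dot (bigD1 k) //= mxE !eqxx mulr1 big1 ?addr0 // => j /negbTE jk.
by rewrite mxE jk andbF mulr0.
Qed.

Lemma row_norm_delta k : ip_norm row_dot (delta_mx ord0 k) = 1.
Proof. by rewrite /ip_norm row_dot_delta mxE !eqxx sqrtr1. Qed.

Lemma row_dot_complete (u : nat -> 'rV[R]_N) :
  (forall e, 0 < e -> exists M, forall p q, (M <= p)%N -> (M <= q)%N ->
     ip_norm row_dot (u p - u q) < e) ->
  exists l, forall e, 0 < e -> exists M, forall n, (M <= n)%N ->
     ip_norm row_dot (u n - l) < e.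
Proof.
move=> u_cauchy.
have coord_cvg k : exists l, forall e, 0 < e -> exists M, forall n,
    (M <= n)%N -> `|u n ord0 k - l| < e.
  apply: real_cauchy_cvg => e e0.
  have [M HM] := u_cauchy e e0; exists M => p q Mp Mq.
  apply: le_lt_trans (HM p q Mp Mq); apply: le_trans (row_coord_le_norm _ k).
  by rewrite !mxE.
have [l ul] := fin_all_exists coord_cvg.
exists (\row_k l k) => e e0.
have e'_gt0 : 0 < e / (N%:R + 1) by rewrite divr_gt0 ?ltr_wpDl.
have [M HM] := fin_all_exists (fun k => ul k _ e'_gt0).
exists (\max_k M k)%N => n Mn; apply: row_norm_lt => // k.
rewrite !mxE; apply/ltW/HM/(leq_trans _ Mn); exact: leq_bigmax.
Qed.

Lemma row_rat_dense : exists d : nat -> 'rV[R]_N,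
  forall x e, 0 < e -> exists n, ip_norm row_dot (x - d n) < e.
Proof.
exists (fun n => if @unpickle 'rV[rat]_N n is Some q then map_mx ratr q else 0).
move=> x e e0; set r := e / (N%:R + 1); have r0 : 0 < r by rewrite divr_gt0 ?ltr_wpDl.
have coord_approx k : exists q : rat, `|x ord0 k - ratr q| < r.
  have [q] := @rat_in_itvoo R (x ord0 k - r) (x ord0 k + r) ltac:(lra).
  by rewrite in_itv /= => /andP[q1 q2]; exists q; rewrite ltr_norml; apply/andP; split; lra.
have [q Hq] := fin_all_exists coord_approx.
exists (pickle (\row_k q k)); rewrite pickleK.
by apply: row_norm_lt => // k; rewrite !mxE; apply/ltW.
Qed.

Lemma row_dot_separable_hilbert : is_separable_hilbert row_dot.
Proof.
split; [|by move=> x y; apply: eq_bigr => k _; rewrite mulrC|exact: row_dot_ge0| |].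
- move=> a x y z; rewrite /row_dot mulr_sumr -big_split /=.
  by apply: eq_bigr => k _; rewrite !mxE mulrDl mulrA.
- move=> x /eqP; rewrite psumr_eq0 => [/allP x0|k _]; last by rewrite -expr2 sqr_ge0.
  apply/matrixP => i k; rewrite ord1 mxE.
  by have := x0 k (mem_index_enum _); rewrite -expr2 sqrf_eq0 => /eqP.
- exact: (conj row_dot_complete row_rat_dense).
Qed.

End RowDot.

Lemma sigma_gen_closed (X : Type) (G : set (set X)) : sigma_closed (sigma_gen G).
Proof.
split.
- by move=> S [].
- move=> A GA S S_closed GS; case: (S_closed) => _ SC _.
  by apply: SC; apply: GA.
- move=> A GA S S_closed GS; case: (S_closed) => _ _ SU.
  by apply: SU => n; apply: GA.
Qed.

Lemma sigma_gen_sub (X : Type) (G : set (set X)) A : G A -> sigma_gen G A.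
Proof. by move=> GA S _; apply. Qed.

Lemma open_preimage_borel_measurable (A B : Type) (openA : set (set A))
    (openB : set (set B)) (f : A -> B) :
  (forall U, openB U -> openA (f @^-1` U)) -> borel_measurable openA openB f.
Proof.
move=> f_cont U BU; apply: (BU (fun V => sigma_gen openA (f @^-1` V))); last first.
  by move=> V /f_cont/sigma_gen_sub.
have [S0 SC SU] := sigma_gen_closed openA; split.
- by rewrite preimage_set0.
- by move=> V SV; rewrite -preimage_setC; apply: SC.
- by move=> V SV; rewrite preimage_bigcup; apply: SU.
Qed.

Section InfImage.
Variables (R : realType) (X : Type) (P : set X).
Hypothesis P_neq0 : P !=set0.

Lemma inf_image_norm_le (f : X -> R) c :
  (forall x, P x -> `|f x| <= c) -> `|inf (f @` P)| <= c.
Proof.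
move=> fc; have f_lb : has_lbound (f @` P).
  by exists (- c) => _ [x Px <-]; have := fc x Px; rewrite ler_norml => /andP[].
have [x Px] := P_neq0; rewrite ler_norml; apply/andP; split.
- apply: lb_le_inf; first by exists (f x), x.
  by move=> _ [y Py <-]; have := fc y Py; rewrite ler_norml => /andP[].
- apply: le_trans (ge_inf f_lb (ex_intro2 _ _ x Px erefl)) _.
  by apply: le_trans (fc x Px); apply: ler_norm.
Qed.

Lemma inf_image_le_add (f g : X -> R) L : has_lbound (f @` P) ->
  (forall x, P x -> f x <= g x + L) -> inf (f @` P) <= inf (g @` P) + L.
Proof.
move=> f_lb fg; rewrite -lerBlDr; apply: lb_le_inf.
  by have [x Px] := P_neq0; exists (g x), x.
move=> _ [x Px <-]; rewrite lerBlDr.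
exact: le_trans (ge_inf f_lb (ex_intro2 _ _ x Px erefl)) (fg x Px).
Qed.

Lemma inf_image_dist (f g : X -> R) L : has_lbound (f @` P) ->
  (forall x, P x -> `|f x - g x| <= L) -> `|inf (f @` P) - inf (g @` P)| <= L.
Proof.
move=> [b f_b] fg.
have fg' x : P x -> f x - L <= g x /\ g x - L <= f x.
  by move=> Px; have := fg x Px; rewrite ler_norml => /andP[]; split; lra.
have g_lb : has_lbound (g @` P).
  exists (b - L) => _ [x Px <-]; have [+ _] := fg' x Px.
  by apply: le_trans; rewrite lerD2r; apply: f_b; exists x.
have fg_inf : inf (f @` P) <= inf (g @` P) + L.
  by apply: inf_image_le_add => [|x /fg'[+ _]]; [exists b | lra].
have gf_inf : inf (g @` P) <= inf (f @` P) + L.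
  by apply: inf_image_le_add => // x /fg'[_]; lra.
by rewrite ler_norml; apply/andP; split; lra.
Qed.

End InfImage.

Section Squares.
Variable R : realFieldType.
Implicit Types a b c d x y z M X Y Z : R.

Lemma sqr_sub_le a c M : `|a| <= M -> `|c| <= M -> (a - c) ^+ 2 <= 4 * M ^+ 2.
Proof.
move=> aM cM; have M0 : 0 <= M by apply: le_trans aM.
have ac : `|a - c| <= 2 * M by apply: le_trans (ler_normB _ _) _; lra.
have ac0 : 0 <= `|a - c| by [].
by rewrite -real_normK ?num_real // !expr2; nra.
Qed.

Lemma sqr_sub_dist a b c M d : `|a| <= M -> `|b| <= M -> `|c| <= M ->
  `|a - b| <= d -> `|(a - c) ^+ 2 - (b - c) ^+ 2| <= d * (4 * M).
Proof.
move=> aM bM cM abd.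
have -> : (a - c) ^+ 2 - (b - c) ^+ 2 = (a - b) * (a + b - 2 * c) by ring.
rewrite normrM ler_pM //.
move: aM bM cM; rewrite !ler_norml => /andP[? ?] /andP[? ?] /andP[? ?].
by apply/andP; split; lra.
Qed.

Lemma norm_comb3_le a b c x y z X Y Z :
  0 <= a <= 1 -> 0 <= b <= 1 -> 0 <= c <= 1 ->
  `|x| <= X -> `|y| <= Y -> `|z| <= Z -> `|a * x + b * y + c * z| <= X + Y + Z.
Proof.
have term u v V : 0 <= u <= 1 -> `|v| <= V -> `|u * v| <= V.
  move=> /andP[u0 u1] vV; rewrite normrM ger0_norm //.
  by apply: le_trans vV; rewrite ler_piMl.
move=> a01 b01 c01 xX yY zZ.
apply: le_trans (ler_normD _ _) _; rewrite lerD ?term //.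
by apply: le_trans (ler_normD _ _) _; rewrite lerD ?term.
Qed.

End Squares.

Lemma norm_sum_sub_le (R : realFieldType) n (f g : 'I_n -> R) c :
  (forall i, `|f i - g i| <= c) -> `|\sum_i f i - \sum_i g i| <= n%:R * c.
Proof.
move=> fg; rewrite -sumrB; apply: le_trans (ler_norm_sum _ _ _) _.
by apply: le_trans (ler_sum _ (fun i _ => fg i)) _; rewrite sumr_const card_ord mulr_natl.
Qed.

Section SquaredNorm.
Variables (R : realType) (p : nat) (M : R).
Implicit Types a b c : 'rV[R]_p.

Lemma sqnorm_ge0 a : 0 <= sqnorm a.
Proof. by apply: sumr_ge0 => k _; rewrite sqr_ge0. Qed.

Lemma sqnorm_sub_le a c : (forall k, `|a ord0 k| <= M) -> (forall k, `|c ord0 k| <= M) ->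
  sqnorm (a - c) <= p%:R * (4 * M ^+ 2).
Proof.
move=> aM cM; apply: (@le_trans _ _ (\sum_(k < p) 4 * M ^+ 2)).
  by apply: ler_sum => k _; rewrite !mxE; apply: sqr_sub_le.
by rewrite sumr_const card_ord [leRHS]mulr_natl.
Qed.

Lemma sqnorm_sub_dist a b c d : (forall k, `|a ord0 k| <= M) ->
  (forall k, `|b ord0 k| <= M) -> (forall k, `|c ord0 k| <= M) ->
  (forall k, `|a ord0 k - b ord0 k| <= d) ->
  `|sqnorm (a - c) - sqnorm (b - c)| <= p%:R * (d * (4 * M)).
Proof. by move=> *; apply: norm_sum_sub_le => k; rewrite !mxE; apply: sqr_sub_dist. Qed.

End SquaredNorm.

Lemma norm_pair_average_le (R : numDomainType) (I J : finType) (w : I -> J -> R)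
    (t : I -> J -> I -> J -> R) c :
  (forall i j, 0 <= w i j) -> \sum_i \sum_j w i j = 1 ->
  (forall i j k l, `|t i j k l| <= c) ->
  `|\sum_i \sum_j \sum_k \sum_l t i j k l * w k l * w i j| <= c.
Proof.
move=> w_ge0 w_mass tc.
have -> : c = \sum_i \sum_j \sum_k \sum_l c * w k l * w i j.
  transitivity (c * (\sum_k \sum_l w k l) * (\sum_i \sum_j w i j)).
    by rewrite w_mass !mulr1.
  rewrite mulr_sumr; apply: eq_bigr => i _; rewrite mulr_sumr; apply: eq_bigr => j _.
  rewrite mulr_sumr mulr_suml; apply: eq_bigr => k _.
  by rewrite mulr_sumr mulr_suml; exact: eq_bigr.
do 4 (apply: le_trans (ler_norm_sum _ _ _) (ler_sum _ _) => ? _).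
rewrite !normrM !(ger0_norm (w_ge0 _ _)).
by do 2 apply: ler_wpM2r => //.
Qed.

Section Couplings.
Variable R : realType.

Lemma coupling_mass n n' (pi : 'I_n -> 'I_n' -> R) :
  (0 < n)%N -> coupling pi -> \sum_i \sum_j pi i j = 1.
Proof.
move=> n_gt0 [_ pi_row _]; under eq_bigr do rewrite pi_row.
by rewrite sumr_const card_ord -[_ *+ n]mulr_natl mulfV // pnatr_eq0 -lt0n.
Qed.

Lemma uniform_coupling n n' : (0 < n)%N -> (0 < n')%N ->
  @coupling R n n' (fun _ _ => (n%:R * n'%:R)^-1).
Proof.
move=> n_gt0 n'_gt0.
have [n0 n'0] : n%:R != 0 :> R /\ n'%:R != 0 :> R by rewrite !pnatr_eq0 -!lt0n.
split=> [i j|i|j]; first by rewrite invr_ge0 mulr_ge0.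
- by rewrite sumr_const card_ord -[_ *+ n']mulr_natl; field; rewrite n0 n'0.
- by rewrite sumr_const card_ord -[_ *+ n]mulr_natl; field; rewrite n0 n'0.
Qed.

End Couplings.

Arguments gF {R S T} g _.
Arguments gA {R S T} g _ _.
Arguments gE {R S T} g _ _.

Section FNGWContinuity.
Variables (R : realType) (S T : nat) (alpha beta : R).
Hypotheses (alpha_ge0 : 0 <= alpha) (beta_ge0 : 0 <= beta)
  (alpha_beta_le1 : alpha + beta <= 1).
Local Notation graph := (graph R S T).

Definition entries_bounded (M : R) (g : graph) : Prop :=
  [/\ forall i k, `|gF g i ord0 k| <= M,
      forall i j, `|gA g i j| <= M &
      forall i j k, `|gE g i j ord0 k| <= M].

Definition fngw_integrand (g y : graph) (i : 'I_(gn g)) (j : 'I_(gn y))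
    (k : 'I_(gn g)) (l : 'I_(gn y)) : R :=
  alpha * sqnorm (gE g i k - gE y j l) + beta * (gA g i k - gA y j l) ^+ 2
  + (1 - alpha - beta) * sqnorm (gF g i - gF y j).
Arguments fngw_integrand : clear implicits.

Lemma fngw_weights :
  [/\ 0 <= alpha <= 1, 0 <= beta <= 1 & 0 <= 1 - alpha - beta <= 1].
Proof. by move: alpha_ge0 beta_ge0 alpha_beta_le1 => *; split; apply/andP; split; lra. Qed.

Lemma fngw_integrand_norm_le M g y i j k l :
  entries_bounded M g -> entries_bounded M y ->
  `|fngw_integrand g y i j k l| <= (T%:R + 1 + S%:R) * (4 * M ^+ 2).
Proof.
move=> [gF_M gA_M gE_M] [yF_M yA_M yE_M]; have [a01 b01 c01] := fngw_weights.
rewrite mulrDl mulrDl mul1r.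
apply: norm_comb3_le => //.
- by rewrite ger0_norm ?sqnorm_ge0 //; apply: sqnorm_sub_le.
- by rewrite ger0_norm ?sqr_ge0 //; apply: sqr_sub_le.
- by rewrite ger0_norm ?sqnorm_ge0 //; apply: sqnorm_sub_le.
Qed.

Lemma fngw_integrand_lipschitz n (F1 F2 : 'I_n -> 'rV[R]_S) (A1 A2 : 'I_n -> 'I_n -> R)
    (E1 E2 : 'I_n -> 'I_n -> 'rV[R]_T) (y : graph) M d i j k l :
  let g1 := Graph F1 A1 E1 in let g2 := Graph F2 A2 E2 in
  entries_bounded M g1 -> entries_bounded M g2 -> entries_bounded M y ->
  (forall i k, `|F1 i ord0 k - F2 i ord0 k| <= d) ->
  (forall i j, `|A1 i j - A2 i j| <= d) ->
  (forall i j k, `|E1 i j ord0 k - E2 i j ord0 k| <= d) ->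
  `|fngw_integrand g1 y i j k l - fngw_integrand g2 y i j k l|
    <= d * ((T%:R + 1 + S%:R) * (4 * M)).
Proof.
move=> g1 g2 [F1_M A1_M E1_M] [F2_M A2_M E2_M] [yF_M yA_M yE_M] dF dA dE.
have [a01 b01 c01] := fngw_weights.
have regroup (x1 y1 z1 x2 y2 z2 : R) :
    alpha * x1 + beta * y1 + (1 - alpha - beta) * z1
    - (alpha * x2 + beta * y2 + (1 - alpha - beta) * z2)
    = alpha * (x1 - x2) + beta * (y1 - y2) + (1 - alpha - beta) * (z1 - z2).
  by ring.
rewrite /fngw_integrand regroup.
rewrite (_ : d * _ = T%:R * (d * (4 * M)) + d * (4 * M) + S%:R * (d * (4 * M))); last by ring.
apply: norm_comb3_le => //.
- exact: sqnorm_sub_dist.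
- exact: sqr_sub_dist.
- exact: sqnorm_sub_dist.
Qed.

Lemma fngw_cost_norm_le M (g y : graph) (pi : 'I_(gn g) -> 'I_(gn y) -> R) :
  (0 < gn g)%N -> coupling pi -> entries_bounded M g -> entries_bounded M y ->
  `|fngw_cost alpha beta pi| <= (T%:R + 1 + S%:R) * (4 * M ^+ 2).
Proof.
move=> g_gt0 pi_c gM yM; have [pi_ge0 _ _] := pi_c.
apply: (norm_pair_average_le (t := fngw_integrand g y)) => //.
  exact: coupling_mass pi_c.
by move=> i j k l; apply: fngw_integrand_norm_le.
Qed.

Lemma fngw_cost_lipschitz n (F1 F2 : 'I_n -> 'rV[R]_S) (A1 A2 : 'I_n -> 'I_n -> R)
    (E1 E2 : 'I_n -> 'I_n -> 'rV[R]_T) (y : graph) M d (pi : 'I_n -> 'I_(gn y) -> R) :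
  let g1 := Graph F1 A1 E1 in let g2 := Graph F2 A2 E2 in
  (0 < n)%N -> coupling pi ->
  entries_bounded M g1 -> entries_bounded M g2 -> entries_bounded M y ->
  (forall i k, `|F1 i ord0 k - F2 i ord0 k| <= d) ->
  (forall i j, `|A1 i j - A2 i j| <= d) ->
  (forall i j k, `|E1 i j ord0 k - E2 i j ord0 k| <= d) ->
  `|fngw_cost alpha beta (g := g1) (g' := y) pi - fngw_cost alpha beta (g := g2) pi|
    <= d * ((T%:R + 1 + S%:R) * (4 * M)).
Proof.
move=> g1 g2 n_gt0 pi_c g1M g2M yM dF dA dE; have [pi_ge0 _ _] := pi_c.
set t := fun i j k l => fngw_integrand g1 y i j k l - fngw_integrand g2 y i j k l.
have -> : fngw_cost alpha beta (g := g1) (g' := y) pi - fngw_cost alpha beta (g := g2) pi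
    = \sum_i \sum_j \sum_k \sum_l t i j k l * pi k l * pi i j.
  do 4 (rewrite -sumrB; apply: eq_bigr => ? _).
  by rewrite /t /= [in RHS]mulrBl [in RHS]mulrBl.
apply: norm_pair_average_le => //; first exact: coupling_mass pi_c.
by move=> i j k l; apply: fngw_integrand_lipschitz.
Qed.

Lemma couplings_neq0 (g y : graph) : (0 < gn g)%N -> (0 < gn y)%N ->
  @coupling R (gn g) (gn y) !=set0.
Proof. by move=> g_gt0 y_gt0; eexists; apply: uniform_coupling. Qed.

Lemma FNGW_norm_le M (g y : graph) : (0 < gn g)%N -> (0 < gn y)%N ->
  entries_bounded M g -> entries_bounded M y ->
  `|FNGW alpha beta g y| <= (T%:R + 1 + S%:R) * (4 * M ^+ 2).
Proof.
move=> g_gt0 y_gt0 gM yM; apply: inf_image_norm_le; first exact: couplings_neq0.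
by move=> pi pi_c; apply: fngw_cost_norm_le.
Qed.

Lemma FNGW_lipschitz M d (g1 g2 y : graph) : (0 < gn g1)%N -> (0 < gn y)%N ->
  entries_bounded M g1 -> entries_bounded M g2 -> entries_bounded M y ->
  graph_close d g1 g2 ->
  `|FNGW alpha beta g1 y - FNGW alpha beta g2 y| <= d * ((T%:R + 1 + S%:R) * (4 * M)).
Proof.
case: g1 g2 => n F1 A1 E1 [n2 F2 A2 E2] /= n_gt0 y_gt0 g1M g2M yM [e [dF dA dE]].
simpl in e; subst n2; have cast_id (e : n = n) (i : 'I_n) : cast_ord e i = i by apply: val_inj.
apply: inf_image_dist; first exact: (couplings_neq0 (g := Graph F1 A1 E1)).
  exists (- ((T%:R + 1 + S%:R) * (4 * M ^+ 2))) => _ [pi pi_c <-].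
  have := fngw_cost_norm_le (g := Graph F1 A1 E1) n_gt0 pi_c g1M yM.
  by rewrite ler_norml => /andP[].
move=> pi pi_c; apply: fngw_cost_lipschitz => //.
- by move=> i k; have := dF i k; rewrite cast_id => /ltW.
- by move=> i j; have := dA i j; rewrite !cast_id => /ltW.
- by move=> i j k; have := dE i j k; rewrite !cast_id => /ltW.
Qed.

Lemma FNGW_row_continuous M N (ys : 'I_N -> graph) (g : graph) e :
  0 < e -> (0 < gn g)%N -> entries_bounded M g ->
  (forall k, (0 < gn (ys k))%N /\ entries_bounded M (ys k)) ->
  exists2 d, 0 < d & forall g', entries_bounded M g' -> graph_close d g g' ->
    ip_norm (@row_dot R N)
      (\row_k FNGW alpha beta g' (ys k) - \row_k FNGW alpha beta g (ys k)) < e.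
Proof.
move=> e0 g_gt0 gM ysM; set L := (T%:R + 1 + S%:R) * (4 * M).
have M0 : 0 <= M.
  by have [_ gA_M _] := gM; apply: le_trans (gA_M (Ordinal g_gt0) (Ordinal g_gt0)).
have L0 : 0 <= L by rewrite mulr_ge0 ?addr_ge0 ?mulr_ge0.
pose e' := e / (N%:R + 1); have e'0 : 0 < e' by rewrite divr_gt0 ?ltr_wpDl.
exists (e' / (L + 1)) => [|g' g'M close]; first by rewrite divr_gt0 ?ltr_wpDl.
apply: row_norm_lt => // k; rewrite !mxE distrC.
have [yk_gt0 ykM] := ysM k.
apply: le_trans (FNGW_lipschitz g_gt0 yk_gt0 gM g'M ykM close) _.
by rewrite mulrAC ler_pdivrMr ?ltr_wpDl // ler_pM2l // -/L lerDl.
Qed.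

End FNGWContinuity.

Lemma calGm_continuous_measurable (R : realType) S T m (Fs : seq 'rV[R]_S)
    (Ts : seq 'rV[R]_T) (H : lmodType R) (ip : H -> H -> R) (f : calGm m Fs Ts -> H) :
  (forall z e, 0 < e -> exists2 d, 0 < d &
     forall z', graph_close d (sval z) (sval z') -> ip_norm ip (f z' - f z) < e) ->
  borel_measurable (@calGm_open R S T m Fs Ts) (ip_open ip) f.
Proof.
move=> f_cont; apply: open_preimage_borel_measurable => U U_open z /U_open[e e0 Ue].
by have [d d0 fd] := f_cont z e e0; exists d => // z' /fd/Ue.
Qed.

Lemma ler_sum_mem (R : numDomainType) (I : eqType) (r : seq I) (F : I -> R) x :
  (forall i, 0 <= F i) -> x \in r -> F x <= \sum_(i <- r) F i.
Proof. by move=> F_ge0 xr; rewrite (big_rem _ xr) /= lerDl sumr_ge0. Qed.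

Section Encoding.
Variables (R : realType) (S T mmax : nat) (Fs : seq 'rV[R]_S) (Ts : seq 'rV[R]_T).

Definition seq_norm1 p (s : seq 'rV[R]_p) : R := \sum_(v <- s) \sum_k `|v ord0 k|.

Lemma seq_norm1_ge0 p (s : seq 'rV[R]_p) : 0 <= seq_norm1 s.
Proof. by do 2 apply: sumr_ge0 => ? _. Qed.

Lemma nth_coord_le_seq_norm1 p (s : seq 'rV[R]_p) j k :
  `|nth 0 s j ord0 k| <= seq_norm1 s.
Proof.
have [js|sj] := ltnP j (size s); last by rewrite nth_default // mxE normr0 seq_norm1_ge0.
have norm1_ge0 (v : 'rV[R]_p) : 0 <= \sum_k `|v ord0 k| by rewrite sumr_ge0.
apply: le_trans (ler_sum_mem norm1_ge0 (mem_nth 0 js)).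
exact: (ler_sum_mem (F := fun k => `|_ ord0 k|)) (mem_index_enum k).
Qed.

Lemma conv_hull_coord_le p (s : seq 'rV[R]_p) x k :
  conv_hull s x -> `|x ord0 k| <= seq_norm1 s.
Proof.
case=> w [w_ge0 w_sum1 ->]; rewrite summxE.
apply: le_trans (ler_norm_sum _ _ _) _.
apply: (@le_trans _ _ (\sum_i w i * seq_norm1 s)); last by rewrite -mulr_suml w_sum1 mul1r.
apply: ler_sum => i _; rewrite !mxE normrM ger0_norm // ler_wpM2l //.
exact: nth_coord_le_seq_norm1.
Qed.

Definition graph_bound : R := 1 + seq_norm1 Fs + seq_norm1 Ts.

Lemma graph_bound_ge : [/\ 1 <= graph_bound, seq_norm1 Fs <= graph_bound
  & seq_norm1 Ts <= graph_bound].
Proof.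
by have := seq_norm1_ge0 Fs; have := seq_norm1_ge0 Ts; rewrite /graph_bound; split; lra.
Qed.

Lemma calGm_entries_bounded m (g : graph R S T) :
  in_calGm m Fs Ts g -> entries_bounded graph_bound g.
Proof.
case=> _ gF_conv gA01 gE_conv; have [b1 bF bT] := graph_bound_ge; split.
- by move=> i k; apply: le_trans bF; apply: conv_hull_coord_le.
- by move=> i j; have /andP[a0 a1] := gA01 i j; rewrite ger0_norm // (le_trans a1).
- by move=> i j k; apply: le_trans bT; apply: conv_hull_coord_le.
Qed.

Definition graph_code : finType :=
  ('I_mmax * {ffun 'I_mmax -> 'I_(size Fs).+1} * {ffun 'I_mmax * 'I_mmax -> bool}
    * {ffun 'I_mmax * 'I_mmax -> 'I_(size Ts).+1})%type.

(* The code (n, f, a, e) describes a graph on n + 1 nodes: f and e index into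
   Fs and Ts (the out-of-range index reads the default 0), and only the first
   n + 1 entries of f, a and e are used. *)
Definition decode_graph (c : graph_code) : graph R S T :=
  let: (n, f, a, e) := c in
  let w := widen_ord (ltn_ord n) in
  Graph (fun i => nth 0 Fs (f (w i))) (fun i j => (a (w i, w j))%:R)
    (fun i j => nth 0 Ts (e (w i, w j))).

Lemma decode_graph_gt0 c : (0 < gn (decode_graph c))%N.
Proof. by case: c => [[[n f] a] e]. Qed.

Lemma decode_graph_entries_bounded c : entries_bounded graph_bound (decode_graph c).
Proof.
have [b1 bF bT] := graph_bound_ge; case: c => [[[n f] a] e]; split => /=.
- by move=> i k; apply: le_trans bF; apply: nth_coord_le_seq_norm1.
- by move=> i j; apply: le_trans b1; case: (a _); rewrite ?normr1 ?normr0.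
- by move=> i j k; apply: le_trans bT; apply: nth_coord_le_seq_norm1.
Qed.

Definition extend_ord (X : Type) n (x0 : X) (u : 'I_n -> X) (j : nat) : X :=
  if insub j is Some i then u i else x0.

Lemma extend_ordE (X : Type) n p (lt_np : (n <= p)%N) (x0 : X) (u : 'I_n -> X) i :
  extend_ord x0 u (widen_ord lt_np i) = u i.
Proof. by rewrite /extend_ord /= valK. Qed.

Lemma calG_decode (y : graph R S T) :
  in_calG mmax Fs Ts y -> exists c, y = decode_graph c.
Proof.
case: y => [[|n] F A E] [/andP[//= _ n_lt] /= F_in A01 E_in].
pose index_of p (s : seq 'rV[R]_p) v : 'I_(size s).+1 := inord (index v s).
pose ext2 X x0 (u : 'I_n.+1 -> 'I_n.+1 -> X) (ij : 'I_mmax * 'I_mmax) :=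
  extend_ord x0 (fun i => extend_ord x0 (u i) ij.2) ij.1.
exists (Ordinal n_lt, [ffun j : 'I_mmax => index_of _ Fs (extend_ord 0 F j) : 'I__],
  [ffun ij => ext2 _ 0 A ij == 1 : bool],
  [ffun ij => index_of _ Ts (ext2 _ 0 E ij) : 'I__]).
have index_ofK p (s : seq 'rV[R]_p) v : v \in s -> nth 0 s (index_of _ s v) = v.
  by move=> vs; rewrite inordK ?nth_index // ltnS ltnW // index_mem.
rewrite /decode_graph /=; congr Graph; apply: funext => i.
- by rewrite ffunE extend_ordE index_ofK.
- apply: funext => j; rewrite ffunE /ext2 !extend_ordE.
  by case: (A01 i j) => ->; rewrite ?eqxx // eq_sym oner_eq0.
- by apply: funext => j; rewrite ffunE /ext2 !extend_ordE index_ofK.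
Qed.

End Encoding.

Theorem proposition3p7 (R : realType) (S T m mmax : nat)
  (Fs : seq 'rV[R]_S) (Ts : seq 'rV[R]_T) (alpha beta : R) :
  (1 <= S)%N -> (1 <= T)%N -> (1 <= m)%N -> (1 <= mmax)%N ->
  0 <= alpha -> 0 <= beta -> alpha + beta <= 1 ->
  exists (H : lmodType R) (ip : H -> H -> R),
    is_separable_hilbert ip /\
    exists (psi : calGm m Fs Ts -> H) (phi : calG mmax Fs Ts -> H),
      [/\ borel_measurable (@calGm_open R S T m Fs Ts) (ip_open ip) psi,
          borel_measurable (@discrete_open _) (ip_open ip) phi,
          (exists B : R, forall z, ip_norm ip (psi z) <= B),
          (exists B : R, forall y, ip_norm ip (phi y) <= B) &
          ((forall z y, FNGW alpha beta (sval z) (sval y) = ip (psi z) (phi y)) /\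
          (forall y, ip_norm ip (phi y) <= 1))].
Proof.
move=> _ _ m_gt0 _ alpha_ge0 beta_ge0 alpha_beta_le1.
pose N := #|graph_code mmax Fs Ts|; pose M := graph_bound Fs Ts.
pose ys (k : 'I_N) := decode_graph (enum_val k).
have ysM k : (0 < gn (ys k))%N /\ entries_bounded M (ys k).
  by split; [apply: decode_graph_gt0 | apply: decode_graph_entries_bounded].
have zM (z : calGm m Fs Ts) : (0 < gn (sval z))%N /\ entries_bounded M (sval z).
  by case: (svalP z) => m_eq *; split; [rewrite m_eq | apply: calGm_entries_bounded (svalP z)].
have code (y : calG mmax Fs Ts) : {c : graph_code mmax Fs Ts | sval y = decode_graph c}.
  by apply: cid; apply: calG_decode (svalP y).
pose psi (z : calGm m Fs Ts) := \row_k FNGW alpha beta (sval z) (ys k).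
pose phi y := delta_mx ord0 (enum_rank (sval (code y))) : 'rV[R]_N.
exists 'rV[R]_N, (@row_dot R N); split; first exact: row_dot_separable_hilbert.
exists psi, phi; split.
- apply: calGm_continuous_measurable => z e e0; have [z_gt0 zM'] := zM z.
  have [d d0 psi_d] := FNGW_row_continuous alpha_ge0 beta_ge0 alpha_beta_le1 e0 z_gt0 zM' ysM.
  by exists d => // z'; apply: psi_d; have [] := zM z'.
- by apply: open_preimage_borel_measurable.
- exists (N%:R * ((T%:R + 1 + S%:R) * (4 * M ^+ 2))) => z; apply: row_norm_le => k.
  have [z_gt0 zM'] := zM z; have [yk_gt0 ykM] := ysM k.
  by rewrite mxE; apply: FNGW_norm_le.
- by exists 1 => y; rewrite row_norm_delta.
split=> [z y|y]; last by rewrite row_norm_delta.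
by rewrite row_dot_delta mxE /ys enum_rankK -(svalP (code y)).
Qed.
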